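(* Let $(V,Y,\mathbf 1,\omega)$ be a vertex operator algebra, $g$ an automorphism of $V$ of finite order $T$, and $n,m\in(1/T)\mathbb N$. Then $g$ is an automorphism of the vertex algebra $\exp(V,\omega)$, and $A_{g,n}(V,\omega)=\tilde A_{g,n}(\exp(V,\omega))$ and $A_{g,n,m}(V,\omega)=\tilde A_{g,n,m}(\exp(V,\omega))$ (equal subspaces $O_{g,n}(V)=\tilde O_{g,n}(\exp(V,\omega))$, $O_{g,n,m}(V)=\tilde O_{g,n,m}(\exp(V,\omega))$ and equal products).
   Context: A vertex operator algebra $(V,Y,\mathbf 1,\omega)$ is a vertex algebra with $V=\bigoplus_{n\in\mathbb Z}V_n$, $\dim V_n<\infty$, $V_n=0$ for $n\ll0$, $\omega\in V_2$, $L(m)=\omega_{m+1}$ satisfying the Virasoro relations with central charge $c$, $L(0)|_{V_n}=n$, $Y(L(-1)w,z)=\frac d{dz}Y(w,z)$; $\mathrm{wt}\,u=n$ for $u\in V_n$. An automorphism $g$ is a vertex algebra automorphism with $g\omega=\omega$; $V^r=\{v:gv=e^{-2\pi\sqrt{-1}r/T}v\}$. $\exp(V,\omega)$ is the vertex algebra on $V$ with vacuum $\mathbf 1$ and vertex operator $Y[u,z]=Y(e^{zL(0)}u,e^z-1)$ (its $\mathcal D$-operator is $L(-1)+L(0)$). For $k,l\in\{0,\dots,T-1\}$, $\delta_k(l)=1$ if $k\ge l$, $0$ if $k<l$, $\delta_k(T)=0$; $n=\lfloor n\rfloor+\bar n/T$. VOA side: for homogeneous $u\in V^r$, $v\in V$,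 $m,n,p\in(1/T)\mathbb N$ with $\bar p-\bar n\equiv r$: $u*_{g,m,p}^{\,n}v=\sum_{i=0}^{\lfloor p\rfloor}(-1)^i\binom{\lfloor m\rfloor+\lfloor n\rfloor-\lfloor p\rfloor-1+\delta_{\bar m}(r)+\delta_{\bar n}(T-r)+i}{i}\operatorname{Res}_z\frac{(1+z)^{\mathrm{wt}u-1+\lfloor m\rfloor+\delta_{\bar m}(r)+r/T}}{z^{\lfloor m\rfloor+\lfloor n\rfloor-\lfloor p\rfloor+\delta_{\bar m}(r)+\delta_{\bar n}(T-r)+i}}Y(u,z)v$, else $0$; $u\circ_{g,m}^{\,n}v=\operatorname{Res}_z\frac{(1+z)^{\mathrm{wt}u-1+\lfloor m\rfloor+\delta_{\bar m}(r)+r/T}}{z^{\lfloor m\rfloor+\lfloor n\rfloor+\delta_{\bar m}(r)+\delta_{\bar n}(T-r)+1}}Y(u,z)v$; $O'_{g,n,m}(V)=\mathrm{span}\{u\circ_{g,m}^{\,n}v\}+\mathrm{span}\{(L(-1)+L(0)+m-n)u\}$; $O''_{g,n,m}$, $O'''_{g,n,m}$, $O_{g,n,m}=O'+O''+O'''$ are defined as below with $*$ in place of $\bullet$ and $O'$ in place of $\tilde O'$; $O_{g,n}=O'_{g,n,n}$, $A_{g,n}(V,\omega)=V/O_{g,n}(V)$ with product $*_{g,n,n}^{\,n}$, $A_{g,n,m}(V,\omega)=V/O_{g,n,m}(V)$ with left action $*_{g,m,n}^{\,n}$ and right action $*_{g,m,m}^{\,n}$. Vertex algebra side (for a vertex algebra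 $(V',Y',\mathbf 1)$ with $\mathcal D'v=v_{-2}\mathbf 1$ and automorphism $g$): for $u\in V'^r$, $\bar p-\bar n\equiv r$: $u\bullet_{g,m,p}^{\,n}v=\sum_{i=0}^{\lfloor p\rfloor}(-1)^i\binom{\lfloor m\rfloor+\lfloor n\rfloor-\lfloor p\rfloor-1+\delta_{\bar m}(r)+\delta_{\bar n}(T-r)+i}{i}\operatorname{Res}_x\frac{e^{x(\lfloor m\rfloor+\delta_{\bar m}(r)+r/T)}}{(e^x-1)^{\lfloor m\rfloor+\lfloor n\rfloor-\lfloor p\rfloor+\delta_{\bar m}(r)+\delta_{\bar n}(T-r)+i}}Y'(u,x)v$, else $0$; $u\diamond_{g,m}^{\,n}v=\operatorname{Res}_x\frac{e^{x(\delta_{\bar m}(r)+\lfloor m\rfloor+r/T)}}{(e^x-1)^{\lfloor m\rfloor+\lfloor n\rfloor+\delta_{\bar m}(r)+\delta_{\bar n}(T-r)+1}}Y'(u,x)v$; $\tilde O'_{g,n,m}=\mathrm{span}\{u\diamond_{g,m}^{\,n}v\}+\mathrm{span}\{(\mathcal D'+m-n)u\}$; $\tilde O''_{g,n,m}$ is the span of all $u\bullet_{g,m,p_3}^{\,n}\big((a\bullet_{g,p_1,p_2}^{\,p_3}b)\bullet_{g,m,p_1}^{\,p_3}c-a\bullet_{g,m,p_2}^{\,p_3}(b\bullet_{g,m,p_1}^{\,p_2}c)\big)$; $\tilde O'''_{g,n,m}=\sum_{p_1,p_2}(V'\bullet_{g,p_1,p_2}^{\,n}\tilde O'_{g,p_2,p_1})\bullet_{g,m,p_1}^{\,n}V'$;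 $\tilde O_{g,n,m}=\tilde O'+\tilde O''+\tilde O'''$; $\tilde O_{g,n}=\tilde O'_{g,n,n}$; $\tilde A_{g,n}(V')=V'/\tilde O_{g,n}$ with product $\bullet_{g,n,n}^{\,n}$; $\tilde A_{g,n,m}(V')=V'/\tilde O_{g,n,m}$ with left action $\bullet_{g,m,n}^{\,n}$ and right action $\bullet_{g,m,m}^{\,n}$. *)

(* Vertex (operator) algebras are encoded through their modes:
   [Y u k v] stands for u_k v, i.e. Y(u,z)v = \sum_k (Y u k v) z^{-k-1}. *)
From HB Require Import structures.
From mathcomp Require Import all_boot all_order all_algebra.
From Stdlib Require Import ClassicalEpsilon.
Set Implicit Arguments. Unset Strict Implicit. Unset Printing Implicit Defensive.
Import Order.TTheory GRing.Theory Num.Theory.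
Local Open Scope ring_scope.

Definition fsum (V : zmodType) (f : nat -> V) : V :=
  match excluded_middle_informative
          (exists n : nat, forall i : nat, (n <= i)%N -> f i = 0) with
  | left H => \sum_(i < proj1_sig (constructive_indefinite_description _ H)) f i
  | right _ => 0
  end.

Inductive span (C : pzRingType) (V : lmodType C) (S : V -> Prop) : V -> Prop :=
  | span_gen v : S v -> span S v
  | span0 : span S 0
  | spanD v w : span S v -> span S w -> span S (v + w)
  | spanZ (a : C) v : span S v -> span S (a *: v).

Definition binC (C : fieldType) (a : C) (i : nat) : C :=
  (\prod_(t < i) (a - t%:R)) / (i`!)%:R.

(* Formal power series  \sum_i f i x^i  as coefficient functions.      *)
Section PowerSeries.
Variable C : fieldType.
Definition ps1 : nat -> C := fun i => (i == 0)%:R.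
Definition psmul (f h : nat -> C) : nat -> C :=
  fun i => \sum_(j < i.+1) f j * h (i - j)%N.
Definition pspow (f : nat -> C) (k : nat) : nat -> C := iter k (psmul f) ps1.
(* first n+1 coefficients of the inverse series of f (f 0 <> 0) *)
Fixpoint psinv_seq (f : nat -> C) (n : nat) : seq C :=
  match n with
  | 0 => [:: (f 0%N)^-1]
  | n'.+1 => let s := psinv_seq f n' in
      rcons s (- (f 0%N)^-1 *
               \sum_(j < n'.+1) f j.+1 * nth 0 s (n' - j)%N)
  end.
Definition psinv (f : nat -> C) : nat -> C := fun i => nth 0 (psinv_seq f i) i.
Definition pszpow (f : nat -> C) (a : int) : nat -> C :=
  match a with
  | Posz k => pspow f k
  | Negz k => pspow (psinv f) k.+1
  end.
Definition expser (b : C) : nat -> C := fun i => b ^+ i / (i`!)%:R.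
(* E(x) = (e^x - 1)/x *)
Definition Eser : nat -> C := fun i => ((i.+1)`!%:R)^-1.
End PowerSeries.

Section VA.
Variables (C : numClosedFieldType) (V : lmodType C).
Implicit Types (Y : V -> int -> V -> V) (one omega : V) (g : V -> V).

Definition binZ (m : int) (i : nat) : C := binC (m%:~R) i.

Definition is_vertex_algebra Y one : Prop :=
  [/\ (forall (a : C) u1 u2 k v, Y (a *: u1 + u2) k v = a *: Y u1 k v + Y u2 k v),
      (forall u k (a : C) v1 v2, Y u k (a *: v1 + v2) = a *: Y u k v1 + Y u k v2),
      [/\ (forall u v, exists N : int, forall k : int, N <= k -> Y u k v = 0),
      (forall k v, Y one k v = (if k == -1 then v else 0))
      &
      (forall u, Y u (-1) one = u /\ (forall k : int, 0 <= k -> Y u k one = 0))]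
    &
      (forall u v w (l m n : int),
         fsum (fun i => binZ m i *: Y (Y u (l + i%:Z) v) (m + n - i%:Z) w)
         = fsum (fun i => ((-1) ^+ i * binZ l i) *:
                 (Y u (l + m - i%:Z) (Y v (n + i%:Z) w)
                  - ((-1) ^ l : C) *: Y v (l + n - i%:Z) (Y u (m + i%:Z) w))))].

Definition Lop Y omega (m : int) : V -> V := Y omega (m + 1).
Definition L0 Y omega : V -> V := Lop Y omega 0.

Definition in_weight Y omega (n : int) (v : V) : Prop := L0 Y omega v = n%:~R *: v.

Definition is_VOA Y one omega (c : C) : Prop :=
  [/\ is_vertex_algebra Y one,
      [/\
      (forall v, exists s : seq (int * V),
          (forall p, p \in s -> in_weight Y omega p.1 p.2) /\ v = \sum_(p <- s) p.2),
      (forall n : int, exists b : seq V,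
          forall v, in_weight Y omega n v -> span (fun w => w \in b) v)
      &
      (exists N : int, forall n : int, n < N -> forall v, in_weight Y omega n v -> v = 0)],
      in_weight Y omega 2 omega,
      (forall (m n : int) v,
          Lop Y omega m (Lop Y omega n v) - Lop Y omega n (Lop Y omega m v)
          = (m - n)%:~R *: Lop Y omega (m + n) v
            + (if m + n == 0 then ((m ^+ 3 - m)%:~R / 12%:R * c) else 0) *: v)
    & (* Y(L(-1)w, z) = d/dz Y(w, z) *)
      (forall w (k : int) v, Y (Lop Y omega (-1) w) k v = - (k%:~R) *: Y w (k - 1) v)].

Definition is_VA_aut Y one g : Prop :=
  [/\ (forall (a : C) u v, g (a *: u + v) = a *: g u + g v),
      bijective g,
      (forall u k v, g (Y u k v) = Y (g u) k (g v))
    & g one = one].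

Definition is_VOA_aut Y one omega g : Prop := is_VA_aut Y one g /\ g omega = omega.

Definition has_order g (T : nat) : Prop :=
  [/\ (0 < T)%N, (forall v, iter T g v = v)
    & forall k, (0 < k < T)%N -> exists v, iter k g v <> v].

(* The vertex algebra exp(V, omega): Y[u,z] = Y(e^{z L(0)} u, e^z - 1). *)
(* Coefficient of z^{-k-1}:                                             *)
(*   u[k] v = sum_{i>=0} sum_{j<=i} 1/j! * [coef of z^{-k-1-j} in       *)
(*            (e^z-1)^{-(k+i)-1}] * (L(0)^j u)_{k+i} v,                 *)
(* where (e^z - 1)^a = z^a E(z)^a with E(z) = (e^z - 1)/z.               *)
Definition expY Y omega : V -> int -> V -> V :=
  fun u k v =>
    fsum (fun i => \sum_(j < i.+1)
            (((j`!)%:R)^-1 * pszpow (@Eser C) (- (k + i%:Z) - 1) (i - j)%N)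
              *: Y (iter j (L0 Y omega) u) (k + i%:Z) v).

Definition Dop Y one : V -> V := fun v => Y v (-2) one.

(* binom(L(0) + a, i) u  (for homogeneous u this is binom(wt u + a, i) u) *)
Fixpoint binprod (L : V -> V) (a : C) (i : nat) (u : V) : V :=
  match i with
  | 0 => u
  | i'.+1 => let w := binprod L a i' u in L w + (a - i'%:R) *: w
  end.
Definition binop (L : V -> V) (a : C) (i : nat) (u : V) : V :=
  ((i`!)%:R)^-1 *: binprod L a i u.

(* VOA side:  Res_z (1+z)^{wt u + a} / z^K  Y(u,z) v  (extended linearly in u) *)
Definition resVOA Y omega (a : C) (K : int) (u v : V) : V :=
  fsum (fun i => Y (binop (L0 Y omega) a i u) (i%:Z - K) v).

(* vertex algebra side:  Res_x e^{x a} / (e^x - 1)^K  Y'(u,x) v *)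
Definition resVA Y (a : C) (K : int) (u v : V) : V :=
  fsum (fun i => psmul (expser a) (pszpow (@Eser C) (- K)) i *: Y u (i%:Z - K) v).

(* g-eigenspaces V^r = { v | g v = e^{-2 pi i r/T} v }, r = 0..T-1      *)
Definition lam (T r : nat) : C := ((T.-root (-1 : C))^-1) ^+ (2 * r).
Definition in_eig g (T r : nat) (v : V) : Prop := g v = lam T r *: v.
Definition eproj g (T r : nat) (u : V) : V :=
  (T%:R)^-1 *: \sum_(k < T) ((lam T r) ^- k) *: iter k g u.

(* elements n of (1/T)N are represented by naturals N with n = N/T:
   floor n = N %/ T, nbar = N %% T *)
Definition fl (T N : nat) : int := (N %/ T)%:Z.
Definition fr (T N : nat) : nat := (N %% T)%N.
(* delta_k(l) for k, l in {0..T}, with delta_k(T) = 0 *)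
Definition delta (T k l : nat) : int := if ((l < T) && (l <= k))%N then 1 else 0.

(* Generic Zhu-type constructions.  [res a K u v] is the residue        *)
(* operation (resVOA or resVA), [s0] the shift (-1 on the VOA side,     *)
(* coming from (1+z)^{wt u - 1 + ...}; 0 on the vertex algebra side),   *)
(* [D] the operator (L(-1)+L(0), resp. D').                             *)
Section Zhu.
Variables (g : V -> V) (T : nat).
Variable res : C -> int -> V -> V -> V.
Variable s0 : C.
Variable D : V -> V.

Definition expo (r M : nat) : C :=
  s0 + (fl T M + delta T (fr T M) r)%:~R + r%:R / T%:R.

(* u *_{g,m,p}^n v  for u in V^r   (m = M/T, p = P/T, n = N/T) *)
Definition prod_r (r M P N : nat) (u v : V) : V :=
  if ((fr T P + T - fr T N) %% T == r)%N then
    let base := fl T M + fl T N - fl T P + delta T (fr T M) r + delta T (fr T N) (T - r) in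
    \sum_(i < (P %/ T).+1)
       ((-1) ^+ i * binC ((base - 1 + i%:Z)%:~R : C) i) *: res (expo r M) (base + i%:Z) u v
  else 0.

(* u o_{g,m}^n v  for u in V^r *)
Definition circ_r (r M N : nat) (u v : V) : V :=
  res (expo r M) (fl T M + fl T N + delta T (fr T M) r + delta T (fr T N) (T - r) + 1) u v.

Definition prod (M P N : nat) (u v : V) : V :=
  \sum_(r < T) prod_r r M P N (eproj g T r u) v.

Definition Oprime (N M : nat) : V -> Prop :=
  span (fun w =>
    (exists r u v, (r < T)%N /\ in_eig g T r u /\ w = circ_r r M N u v)
    \/ (exists u, w = D u + ((M%:R - N%:R) / T%:R) *: u)).

Definition O2 (N M : nat) : V -> Prop :=
  span (fun w => exists (P1 P2 P3 : nat) (u a b c : V),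
    w = prod M P3 N u (prod M P1 P3 (prod P1 P2 P3 a b) c
                       - prod M P2 P3 a (prod M P1 P2 b c))).

Definition O3 (N M : nat) : V -> Prop :=
  span (fun w => exists (P1 P2 : nat) (a o b : V),
    Oprime P2 P1 o /\ w = prod M P1 N (prod P1 P2 N a o) b).

Definition Ofull (N M : nat) : V -> Prop :=
  span (fun w => Oprime N M w \/ O2 N M w \/ O3 N M w).

Definition On (N : nat) : V -> Prop := Oprime N N.
End Zhu.

Definition Lm1L0 Y omega : V -> V := fun u => Lop Y omega (-1) u + L0 Y omega u.
Definition starV Y omega g T := prod g T (resVOA Y omega) (-1).
Definition OV_n Y omega g T N := On g T (resVOA Y omega) (-1) (Lm1L0 Y omega) N.
Definition OV_nm Y omega g T N M := Ofull g T (resVOA Y omega) (-1) (Lm1L0 Y omega) N M.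
Definition bulletE Y' g T := prod g T (resVA Y') 0.
Definition OE_n Y' one g T N := On g T (resVA Y') 0 (Dop Y' one) N.
Definition OE_nm Y' one g T N M := Ofull g T (resVA Y') 0 (Dop Y' one) N M.
End VA.

(* For u homogeneous of weight w one has Y[u,x] = e^{wx} Y(u, e^x - 1), and the
   substitution z = e^x - 1 turns Res_x e^{bx} (e^x - 1)^{-l-1} into
   Res_z (1 + z)^{b-1} z^{-l-1} = binom(b - 1, l).  Consequently
     Res_x e^{ax} (e^x - 1)^{-K} Y[u,x] v = Res_z (1 + z)^{wt u + a - 1} z^{-K} Y(u,z) v,
   i.e. the residue of exp(V, omega) at exponent a is the residue of V at a - 1.  That
   shift is exactly the difference between the exponents in the definitions of the
   two families of products, and D' = L(-1) + L(0) on exp(V, omega), so all products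
   and all the subspaces O', O'', O''' coincide. *)

From HB Require Import structures.
From mathcomp Require Import all_boot all_order all_algebra.
From mathcomp Require Import boolp.
From mathcomp Require Import ring zify.
From Stdlib Require Import ClassicalEpsilon.
Import Order.TTheory GRing.Theory Num.Theory.
Local Open Scope ring_scope.
Set Implicit Arguments. Unset Strict Implicit. Unset Printing Implicit Defensive.

Lemma exchange_big_nat_triangle (R : nmodType) (F : nat -> nat -> R) n :
  \sum_(0 <= a < n) \sum_(0 <= b < a.+1) F a b =
  \sum_(0 <= b < n) \sum_(b <= a < n) F a b.
Proof.
elim: n => [|n IH]; first by rewrite !big_geq.
rewrite big_nat_recr //= IH [in RHS]big_nat_recr //= big_nat1.
have -> : \sum_(0 <= b < n) \sum_(b <= a < n.+1) F a b =
          \sum_(0 <= b < n) (\sum_(b <= a < n) F a b + F n b).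
  by apply: eq_big_nat => b /andP[_ hb]; rewrite big_nat_recr // ltnW.
by rewrite big_split /= -addrA [in LHS]big_nat_recr.
Qed.

Section FormalPowerSeries.
Variable C : fieldType.

Definition ps := nat -> C.
HB.instance Definition _ := Choice.on ps.

Definition ps0 : ps := fun _ => 0.
Definition ps_add (f h : ps) : ps := fun i => f i + h i.
Definition ps_opp (f : ps) : ps := fun i => - f i.

Lemma ps_addA : associative ps_add.
Proof. by move=> f h k; apply: funext => i; rewrite /ps_add addrA. Qed.
Lemma ps_addC : commutative ps_add.
Proof. by move=> f h; apply: funext => i; rewrite /ps_add addrC. Qed.
Lemma ps_add0 : left_id ps0 ps_add.
Proof. by move=> f; apply: funext => i; rewrite /ps_add add0r. Qed.
Lemma ps_addN : left_inverse ps0 ps_opp ps_add.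
Proof. by move=> f; apply: funext => i; rewrite /ps_add addNr. Qed.
HB.instance Definition _ := GRing.isZmodule.Build ps ps_addA ps_addC ps_add0 ps_addN.

Lemma psmulE (f h : ps) i : psmul f h i = \sum_(0 <= j < i.+1) f j * h (i - j)%N.
Proof. by rewrite big_mkord. Qed.

Lemma psmulC : commutative (@psmul C : ps -> ps -> ps).
Proof.
move=> f h; apply: funext => i; rewrite !psmulE big_nat_rev.
by apply: eq_big_nat => j /andP[_ hj]; rewrite mulrC add0n subSS subKn.
Qed.

Lemma psmulA : associative (@psmul C : ps -> ps -> ps).
Proof.
move=> f h k; apply: funext => n; rewrite !psmulE.
under [RHS]eq_bigr do rewrite psmulE mulr_suml.
rewrite exchange_big_nat_triangle; apply: eq_big_nat => b /andP[_ hb].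
rewrite psmulE mulr_sumr (big_addn 0 _ b) subSn //.
apply: eq_big_nat => c /andP[_ hc].
by rewrite mulrA addnK addnC subnDA.
Qed.

Lemma psmul1 : left_id (ps1 C : ps) (@psmul C).
Proof.
move=> f; apply: funext => i; rewrite /psmul big_ord_recl /ps1 /= mul1r subn0.
by rewrite big1 ?addr0 // => j _; rewrite mul0r.
Qed.

Lemma psmulDl : left_distributive (@psmul C : ps -> ps -> ps) +%R.
Proof.
move=> f h k; apply: funext => i.
change (psmul (f + h) k i = psmul f k i + psmul h k i).
by rewrite /psmul -big_split; apply: eq_bigr => j _; rewrite mulrDl.
Qed.

Lemma ps1_neq0 : (ps1 C : ps) != 0.
Proof. by apply/eqP => /(congr1 (fun f : ps => f 0%N))/eqP; rewrite oner_eq0. Qed.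

HB.instance Definition _ :=
  GRing.Zmodule_isComNzRing.Build ps psmulA psmulC psmul1 psmulDl ps1_neq0.

Lemma coefM (f h : ps) i : (f * h) i = \sum_(j < i.+1) f j * h (i - j)%N.
Proof. by []. Qed.
Lemma coefD (f h : ps) i : (f + h) i = f i + h i.
Proof. by []. Qed.
Lemma coefB (f h : ps) i : (f - h) i = f i - h i.
Proof. by []. Qed.
Lemma coef1 i : (1 : ps) i = (i == 0%N)%:R.
Proof. by []. Qed.
Lemma coefMn (f : ps) n i : (f *+ n) i = f i *+ n.
Proof. by elim: n => [|n IH]; rewrite ?mulr0n // !mulrS coefD IH. Qed.

Lemma pspowE (f : ps) k : pspow f k = f ^+ k.
Proof. by elim: k => [|k IH] //=; rewrite IH exprS. Qed.

Definition psC (a : C) : ps := fun i => if i == 0%N then a else 0.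
Definition psX : ps := fun i => (i == 1%N)%:R.

Lemma coefCM a (f : ps) i : (psC a * f) i = a * f i.
Proof.
rewrite coefM big_ord_recl subn0 big1 ?addr0 // => j _.
by rewrite /psC /= mul0r.
Qed.

Lemma coefXM (f : ps) i : (psX * f) i.+1 = f i.
Proof.
rewrite coefM !big_ord_recl big1 ?addr0 => [|j _]; last by rewrite /psX mul0r.
by rewrite /psX /= mul0r add0r mul1r subSS subn0.
Qed.

Lemma coefXM0 (f : ps) : (psX * f) 0%N = 0.
Proof. by rewrite coefM big_ord_recl big_ord0 /psX mul0r addr0. Qed.

Lemma psinv_seq_size (f : ps) n : size (psinv_seq f n) = n.+1.
Proof. by elim: n => [|n IH] //=; rewrite size_rcons IH. Qed.

Lemma nth_psinv_seq (f : ps) n i :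
  (i <= n)%N -> nth 0 (psinv_seq f n) i = psinv f i.
Proof.
elim: n => [|n IH]; first by rewrite leqn0 => /eqP ->.
rewrite leq_eqVlt => /orP[/eqP -> //|hi].
by rewrite /= nth_rcons psinv_seq_size hi IH.
Qed.

Lemma psinvS (f : ps) n :
  psinv f n.+1 = - (f 0%N)^-1 * \sum_(j < n.+1) f j.+1 * psinv f (n - j)%N.
Proof.
rewrite /psinv /= nth_rcons psinv_seq_size ltnn eqxx; congr (_ * _).
by apply: eq_bigr => j _; rewrite nth_psinv_seq // leq_subr.
Qed.

Lemma mul_psinv (f : ps) : f 0%N != 0 -> f * psinv f = 1.
Proof.
move=> f0; apply: funext => -[|n].
  by rewrite coefM big_ord_recl big_ord0 addr0 /psinv /= divff.
rewrite coefM big_ord_recl subn0 psinvS mulrA mulrN divff // mulN1r coef1.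
apply/eqP; rewrite addrC subr_eq0; apply/eqP; apply: eq_bigr => j _.
by [].
Qed.

End FormalPowerSeries.

Section IntegerPowers.
Variables (R : comNzRingType) (e w : R).
Hypothesis mul_ew : e * w = 1.

Definition zpow (a : int) : R :=
  match a with Posz k => e ^+ k | Negz k => w ^+ k.+1 end.

Lemma zpowMe a : zpow a * e = zpow (a + 1).
Proof.
case: a => [k|[|k]] /=.
- by rewrite addn1 exprSr.
- by rewrite expr1 mulrC mul_ew.
- by rewrite subn1 /= exprS mulrC mulrA mul_ew mul1r.
Qed.

Lemma zpowMw a : zpow a * w = zpow (a - 1).
Proof.
case: a => [[|k]|k] /=.
- by rewrite expr0 mul1r.
- by rewrite subn1 /= exprS mulrAC mul_ew mul1r.
- by rewrite addn0 [in RHS]exprSr.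
Qed.

Lemma zpowD a b : zpow a * zpow b = zpow (a + b).
Proof.
case: b => k /=; elim: k a => [|k IH] a.
- by rewrite mulr1 addr0.
- by rewrite exprSr mulrA IH zpowMe; congr zpow; lia.
- by rewrite expr1 zpowMw.
- by rewrite exprSr mulrA IH zpowMw; congr zpow; rewrite !NegzE; lia.
Qed.

End IntegerPowers.

Section ExponentialSeries.
Variable C : numFieldType.
Local Notation ps := (ps C).
Local Notation eps b := (expser b : ps).
Local Notation E := (Eser C : ps).
Local Notation X := (psX C).

Lemma natr_fact_neq0 n : (n`!)%:R != 0 :> C.
Proof. by rewrite pnatr_eq0 -lt0n fact_gt0. Qed.

Lemma expserD (a b : C) : eps a * eps b = eps (a + b).
Proof.
apply: funext => i; rewrite coefM /expser addrC exprDn mulr_suml.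
apply: eq_bigr => -[j /= hj] _; rewrite ltnS in hj.
rewrite -(bin_fact hj) !natrM -mulr_natr.
have h1 := natr_fact_neq0 j; have h2 := natr_fact_neq0 (i - j).
have h3 : 'C(i, j)%:R != 0 :> C by rewrite pnatr_eq0 -lt0n bin_gt0.
by field; rewrite h1 h2 h3.
Qed.

Lemma psX_Eser : X * E = eps 1 - 1.
Proof.
apply: funext => -[|i].
  by rewrite coefXM0 coefB /expser expr0 coef1 /= divr1 subrr.
by rewrite coefXM coefB coef1 /expser /Eser expr1n /= subr0 mul1r.
Qed.

Definition psd (f : ps) : ps := fun i => (i.+1)%:R * f i.+1.

Lemma psd1 : psd 1 = 0.
Proof. by apply: funext => i; rewrite /psd coef1 mulr0. Qed.

Lemma psdM (f h : ps) : psd (f * h) = psd f * h + f * psd h.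
Proof.
apply: funext => i; rewrite /psd coefD !coefM.
have -> : (i.+1)%:R * \sum_(j < i.+2) f j * h (i.+1 - j)%N =
    \sum_(j < i.+2) (j%:R * (f j * h (i.+1 - j)%N))
    + \sum_(j < i.+2) ((i.+1 - j)%N%:R * (f j * h (i.+1 - j)%N)).
  rewrite -big_split mulr_sumr; apply: eq_bigr => -[j /= hj] _.
  by rewrite -mulrDl -natrD subnKC // -ltnS.
congr (_ + _).
  rewrite big_ord_recl mul0r add0r; apply: eq_bigr => j _.
  by rewrite mulrA.
rewrite big_ord_recr /= subnn mul0r addr0; apply: eq_bigr => -[j /= hj] _.
by rewrite mulrCA subSn.
Qed.

Lemma psdX (f : ps) n : psd (f ^+ n.+1) = (f ^+ n * psd f) *+ n.+1.
Proof.
elim: n => [|n IH]; first by rewrite expr1 expr0 mul1r.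
rewrite [f ^+ n.+2]exprS psdM IH [RHS]mulrS mulrC; congr (_ + _).
by rewrite mulrnAr mulrA -exprS.
Qed.

Lemma psd_expser (b : C) : psd (eps b) = psC b * eps b.
Proof.
apply: funext => i; rewrite coefCM /psd /expser factS natrM exprS.
have h1 := natr_fact_neq0 i; have h2 : (i.+1)%:R != 0 :> C by rewrite pnatr_eq0.
by field; rewrite nat1r h1 h2.
Qed.

Lemma psX_psd_Eser : X * psd E = eps 1 - E.
Proof.
apply: funext => -[|i].
  by rewrite coefXM0 coefB /expser /Eser expr0 /= divr1 factS muln1 invr1 subrr.
rewrite coefXM coefB /psd /expser /Eser expr1n mul1r !factS !natrM.
have h1 := natr_fact_neq0 i.
have h2 : (1 + i%:R != 0 :> C) by rewrite nat1r pnatr_eq0.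
have h3 : (2 + i%:R != 0 :> C) by rewrite -natrD pnatr_eq0.
by field; rewrite h1 h2 h3.
Qed.

End ExponentialSeries.

Section ExponentialResidue.
Variable C : numFieldType.
Local Notation ps := (ps C).
Local Notation eps b := (expser b : ps).
Local Notation E := (Eser C : ps).
Local Notation X := (psX C).
Local Notation W := (psinv E : ps).

Lemma Eser0 : E 0%N = 1.
Proof. by rewrite /Eser invr1. Qed.

Lemma mul_Eser_psinv : E * W = 1.
Proof. by apply: mul_psinv; rewrite Eser0 oner_eq0. Qed.

Lemma psd_psinv_Eser : psd W = - (psd E * W ^+ 2).
Proof.
have dEW : psd E * W + E * psd W = 0 by rewrite -psdM mul_Eser_psinv psd1.
apply/eqP; rewrite -subr_eq0 opprK; apply/eqP.
transitivity (W * (psd E * W + E * psd W) - psd W * (E * W - 1)); first by ring.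
by rewrite dEW mul_Eser_psinv subrr !mulr0 subrr.
Qed.

(* Since e^x - 1 = x E(x), this coefficient is Res_x e^{bx} (e^x - 1)^{-l-1}. *)
Definition exp_residue (b : C) (l : nat) : C := (eps b * W ^+ l.+1) l.

Lemma exp_residueD1 b l :
  exp_residue (b + 1) l.+1 = exp_residue b l.+1 + exp_residue b l.
Proof.
have e1 : eps 1 = 1 + X * E by rewrite psX_Eser; ring.
have shift : eps (b + 1) * W ^+ l.+2 = eps b * W ^+ l.+2 + X * (eps b * W ^+ l.+1).
  rewrite -expserD e1 !exprS; apply/eqP; rewrite -subr_eq0; apply/eqP.
  transitivity (X * eps b * (W * W ^+ l) * (E * W - 1)); first by ring.
  by rewrite mul_Eser_psinv subrr mulr0.
by rewrite /exp_residue shift coefD coefXM.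
Qed.

(* Compare the coefficients of x^{l+1} in x (e^{bx} E^{-l-1})'. *)
Lemma exp_residue_deriv b l :
  b * exp_residue b l = exp_residue (b + 1) l.+1 *+ l.+1.
Proof.
set P := eps b * W ^+ l.+1.
have dP : X * psd P = psC b * (X * P) - (eps (b + 1) * W ^+ l.+2) *+ l.+1 + P *+ l.+1.
  rewrite /P psdM psd_expser psdX psd_psinv_Eser -expserD !exprS expr0 mulr1.
  apply/eqP; rewrite -subr_eq0; apply/eqP.
  transitivity ((- (eps b * (W * (W * W ^+ l))) * (X * psd E - (eps 1 - E))
                 + eps b * (W * W ^+ l) * (E * W - 1)) *+ l.+1); first by ring.
  by rewrite psX_psd_Eser mul_Eser_psinv !subrr !mulr0 addr0 mul0rn.
have := congr1 (fun f : ps => f l.+1) dP.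
rewrite coefXM coefD coefB coefCM coefXM !coefMn /psd /exp_residue -/P mulr_natl.
move=> H; apply/eqP; rewrite -subr_eq0; apply/eqP.
by rewrite -[LHS](addrK (P l.+1 *+ l.+1)) -H subrr.
Qed.

Lemma exp_residue0 b : exp_residue b 0 = 1.
Proof.
rewrite /exp_residue expr1 coefM big_ord_recl big_ord0 addr0 /expser expr0 divr1 mul1r.
by rewrite /psinv /= Eser0 invr1.
Qed.

Lemma exp_residueS b l :
  exp_residue b l.+1 * l.+1%:R = (b - l.+1%:R) * exp_residue b l.
Proof.
have := exp_residue_deriv b l; rewrite exp_residueD1 -mulr_natr => deriv.
by rewrite mulrBl deriv; ring.
Qed.

Lemma exp_residue_binC b l : exp_residue b l = binC (b - 1) l.
Proof.
elim: l => [|l IH]; first by rewrite exp_residue0 /binC big_ord0 div1r invr1.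
have hl : (l.+1)%:R != 0 :> C by rewrite pnatr_eq0.
have hf := natr_fact_neq0 C l.
apply: (mulIf hl); rewrite exp_residueS IH /binC big_ord_recr /= factS natrM.
by field; rewrite hf nat1r hl.
Qed.

Lemma pszpow_Eser (a : int) : pszpow E a = zpow E W a.
Proof. by case: a => k; rewrite /pszpow /zpow pspowE. Qed.

(* The coefficient of u_{l-K} v in Res_x e^{ax} (e^x - 1)^{-K} Y[u,x] v, u of weight w. *)
Lemma resVA_expY_coef (a w : C) (K : int) (l : nat) :
  \sum_(i < l.+1) psmul (eps a) (pszpow E (- K)) i *
     psmul (eps w) (pszpow E (- ((i%:Z - K) + (l - i)%N%:Z) - 1)) (l - i)%N
  = binC (a + w - 1) l.
Proof.
transitivity (((eps a * pszpow E (- K)) * (eps w * pszpow E (K - (l.+1)%:Z))) l).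
  rewrite coefM; apply: eq_bigr => -[i /= hi] _.
  by congr (_ * psmul _ (pszpow _ _) _); rewrite ltnS in hi; lia.
rewrite !pszpow_Eser mulrACA expserD (zpowD mul_Eser_psinv).
have -> : - K + (K - (l.+1)%:Z) = Negz l by rewrite NegzE; lia.
by rewrite -/(exp_residue _ l) exp_residue_binC.
Qed.

End ExponentialResidue.

Section FiniteSupportSums.
Variable V : zmodType.
Implicit Types f h : nat -> V.

Definition fsupp f := exists n : nat, forall i, (n <= i)%N -> f i = 0.

Lemma big_ord_trunc f m k :
  (forall i, (m <= i)%N -> f i = 0) -> (m <= k)%N ->
  \sum_(i < k) f i = \sum_(i < m) f i.
Proof.
move=> fm mk; rewrite -!(big_mkord xpredT f) (@big_cat_nat _ _ _ m 0 k _ _ (leq0n m) mk) /=.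
rewrite [X in _ + X]big1_seq ?addr0 // => i /andP[_].
by rewrite mem_index_iota => /andP[+ _]; apply: fm.
Qed.

Lemma fsumE f n : (forall i, (n <= i)%N -> f i = 0) -> fsum f = \sum_(i < n) f i.
Proof.
move=> fn; rewrite /fsum; case: excluded_middle_informative => [H|[]]; last by exists n.
case: (constructive_indefinite_description _ H) => m /= fm.
by rewrite -(big_ord_trunc fm (leq_maxl m n)) -(big_ord_trunc fn (leq_maxr m n)).
Qed.

Lemma fsum_not_fsupp f : ~ fsupp f -> fsum f = 0.
Proof. by move=> H; rewrite /fsum; case: excluded_middle_informative. Qed.

Lemma eq_fsum f h : f =1 h -> fsum f = fsum h.
Proof. by move=> /funext ->. Qed.

Lemma fsuppD f h : fsupp f -> fsupp h -> fsupp (fun i => f i + h i).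
Proof.
move=> [m fm] [n hn]; exists (maxn m n) => i; rewrite geq_max => /andP[mi ni].
by rewrite fm ?hn ?addr0.
Qed.

Lemma fsumD f h : fsupp f -> fsupp h -> fsum (fun i => f i + h i) = fsum f + fsum h.
Proof.
move=> [m fm] [n hn]; set k := maxn m n.
have fk i : (k <= i)%N -> f i = 0 by rewrite geq_max => /andP[+ _]; apply: fm.
have hk i : (k <= i)%N -> h i = 0 by rewrite geq_max => /andP[_]; apply: hn.
rewrite (fsumE fk) (fsumE hk) (@fsumE _ k) ?big_split // => i ki.
by rewrite fk ?hk ?addr0.
Qed.

Lemma fsupp_big (I : eqType) (s : seq I) (F : I -> nat -> V) :
  (forall p, p \in s -> fsupp (F p)) -> fsupp (fun i => \sum_(p <- s) F p i).
Proof.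
elim: s => [|x s IH] Fs; first by exists 0%N => i _; rewrite big_nil.
have [n Fn] := fsuppD (Fs x (mem_head x s)) (IH (fun p ps => Fs p (@mem_behead _ (x :: s) p ps))).
by exists n => i ni; rewrite big_cons Fn.
Qed.

Lemma fsum_big (I : eqType) (s : seq I) (F : I -> nat -> V) :
  (forall p, p \in s -> fsupp (F p)) ->
  fsum (fun i => \sum_(p <- s) F p i) = \sum_(p <- s) fsum (F p).
Proof.
elim: s => [|x s IH] Fs.
  by rewrite big_nil (@fsumE _ 0) ?big_ord0 // => i _; rewrite big_nil.
have Fs' p : p \in s -> fsupp (F p) by move=> ps; apply: Fs; rewrite in_cons ps orbT.
rewrite big_cons -(IH Fs') -fsumD; [|exact: Fs (mem_head x s)|exact: fsupp_big].
by apply: eq_fsum => i; rewrite big_cons.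
Qed.

End FiniteSupportSums.

Lemma sumZ_antidiagonal (R : pzRingType) (V : lmodType R) (f : nat -> nat -> R)
    (G : nat -> V) n :
  (forall l, (n <= l)%N -> G l = 0) ->
  \sum_(i < n) \sum_(j < n) f i j *: G (i + j)%N =
  \sum_(l < n) (\sum_(i < l.+1) f i (l - i)%N) *: G l.
Proof.
move=> Gn.
rewrite -(big_mkord xpredT (fun l => (\sum_(i < l.+1) f i (l - i)%N) *: G l)).
under eq_bigr do rewrite -(big_mkord xpredT (fun i => f i (_ - i)%N)) scaler_suml.
rewrite exchange_big_nat_triangle.
rewrite -(big_mkord xpredT (fun i => \sum_(j < n) f i j *: G (i + j)%N)).
apply: eq_big_nat => i /andP[_ hi].
rewrite -(big_mkord xpredT (fun j => f i j *: G (i + j)%N)).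
rewrite (@big_cat_nat _ _ _ (n - i) 0 n _ _ (leq0n _) (leq_subr _ _)) /=.
rewrite [X in _ + X]big1_seq ?addr0; last first.
  by move=> j /andP[_]; rewrite mem_index_iota => /andP[hj _]; rewrite Gn ?scaler0 //; lia.
by rewrite (big_addn 0 _ i); apply: eq_big_nat => j _; rewrite addnK addnC.
Qed.

Section LinearFunctions.
Variables (R : pzRingType) (U W : lmodType R) (f : U -> W).
Hypothesis f_lin : linear f.

Lemma linfD : {morph f : x y / x + y}.
Proof. exact: (GRing.semilinear_linear f_lin).2. Qed.

Lemma linfZ a : {morph f : x / a *: x}.
Proof. exact: (@GRing.scalable_linear _ _ _ *:%R f f_lin). Qed.

Lemma linf0 : f 0 = 0.
Proof. by rewrite -(scale0r 0) linfZ scale0r. Qed.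

Lemma linf_sum (I : Type) (s : seq I) (F : I -> U) :
  f (\sum_(p <- s) F p) = \sum_(p <- s) f (F p).
Proof. by elim/big_rec2: _ => [|p x y _ <-]; rewrite ?linf0 ?linfD. Qed.

(* Injectivity covers the junk case: f h then also fails to be finitely supported. *)
Lemma linf_fsum (h : nat -> U) : injective f -> f (fsum h) = fsum (fun i => f (h i)).
Proof.
move=> f_inj; have [[n hn]|not_supp] := classic (fsupp h).
  rewrite (fsumE hn) (@fsumE _ _ n) ?linf_sum // => i ni.
  by rewrite hn ?linf0.
rewrite !fsum_not_fsupp ?linf0 // => -[n fhn]; apply: not_supp; exists n => i ni.
by apply: f_inj; rewrite linf0 fhn.
Qed.

End LinearFunctions.

Lemma iter_linear (R : pzRingType) (U : lmodType R) (h : U -> U) j :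
  linear h -> linear (iter j h).
Proof.
by move=> h_lin; elim: j => [|j IH] a x y //=; rewrite IH h_lin.
Qed.

Section VertexAlgebra.
Variables (C : numClosedFieldType) (V : lmodType C) (Y : V -> int -> V -> V) (one : V).
Hypothesis VA : is_vertex_algebra Y one.

Lemma Y_linear_l k v : linear (fun u => Y u k v).
Proof. by move=> a u1 u2; case: VA => YL _ _ _; rewrite YL. Qed.

Lemma Y_linear_r u k : linear (Y u k).
Proof. by move=> a v1 v2; case: VA => _ YR _ _; rewrite YR. Qed.

Lemma Y_trunc u v : exists N : int, forall k : int, N <= k -> Y u k v = 0.
Proof. by case: VA => _ _ [] + _. Qed.

Lemma Y_creation u : Y u (-1) one = u /\ (forall k : int, 0 <= k -> Y u k one = 0).
Proof. by case: VA => _ _ [] _ _ +. Qed.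

Variable omega : V.
Local Notation L0 := (L0 Y omega).

Lemma L0_linear : linear L0.
Proof. exact: Y_linear_r. Qed.

Lemma binprod_linear a i : linear (binprod L0 a i).
Proof.
elim: i => [|i IH] b x y //=.
rewrite IH (linfD L0_linear) (linfZ L0_linear) scalerDr !scalerA mulrC.
by rewrite -scalerA addrACA -scalerDr.
Qed.

Lemma binop_linear a i : linear (binop L0 a i).
Proof.
by move=> b x y; rewrite /binop binprod_linear scalerDr !scalerA mulrC.
Qed.


Section Homogeneous.
Variables (n : int) (u : V).
Hypothesis u_wt : in_weight Y omega n u.
Local Notation w := (n%:~R : C).

Lemma iterL0_hom j : iter j L0 u = w ^+ j *: u.
Proof.
elim: j => [|j IH] /=; first by rewrite scale1r.
by rewrite IH (linfZ L0_linear) u_wt scalerA exprS mulrC.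
Qed.

Lemma binop_hom a i : binop L0 a i u = binC (w + a) i *: u.
Proof.
rewrite /binop /binC mulrC -scalerA; congr (_ *: _).
elim: i => [|i IH] /=; first by rewrite big_ord0 scale1r.
rewrite IH (linfZ L0_linear) u_wt !scalerA -scalerDl big_ord_recr /=.
by congr (_ *: _); ring.
Qed.

Lemma resVOA_hom a K v :
  resVOA Y omega a K u v = fsum (fun i => binC (w + a) i *: Y u (i%:Z - K) v).
Proof. by apply: eq_fsum => i; rewrite binop_hom (linfZ (Y_linear_l _ _)). Qed.

Lemma resVOA_hom_fsupp a K v : fsupp (fun i => Y (binop L0 a i u) (i%:Z - K) v).
Proof.
have [N YN] := Y_trunc u v; exists (absz (N + K)) => i Ni.
by rewrite binop_hom (linfZ (Y_linear_l _ _)) YN ?scaler0 //; lia.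
Qed.

Lemma expY_term_hom k v i :
  \sum_(j < i.+1) (((j`!)%:R)^-1 * pszpow (Eser C) (- (k + i%:Z) - 1) (i - j)%N)
      *: Y (iter j L0 u) (k + i%:Z) v
  = psmul (expser w) (pszpow (Eser C) (- (k + i%:Z) - 1)) i *: Y u (k + i%:Z) v.
Proof.
rewrite /psmul scaler_suml; apply: eq_bigr => j _.
by rewrite iterL0_hom (linfZ (Y_linear_l _ _)) scalerA /expser; congr (_ *: _); ring.
Qed.

Lemma expY_hom k v : expY Y omega u k v =
  fsum (fun i => psmul (expser w) (pszpow (Eser C) (- (k + i%:Z) - 1)) i
                   *: Y u (k + i%:Z) v).
Proof. by apply: eq_fsum => i; rewrite expY_term_hom. Qed.

Lemma expY_hom_fsupp k v :
  fsupp (fun i => \sum_(j < i.+1)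
           (((j`!)%:R)^-1 * pszpow (Eser C) (- (k + i%:Z) - 1) (i - j)%N)
             *: Y (iter j L0 u) (k + i%:Z) v).
Proof.
have [N YN] := Y_trunc u v; exists (absz (N - k)) => i Ni.
by rewrite expY_term_hom YN ?scaler0 //; lia.
Qed.

Lemma expY_hom_trunc v : exists N : int, forall k, N <= k -> expY Y omega u k v = 0.
Proof.
have [N YN] := Y_trunc u v; exists N => k Nk.
by rewrite expY_hom (@fsumE _ _ 0%N) ?big_ord0 // => i _; rewrite YN ?scaler0 //; lia.
Qed.

(* Expand both residues up to the truncation bound B of Y(u, z) v, regroup the
   double sum on the right by l = i + i', and identify the coefficients. *)
Lemma resVOA_expY_hom a K v :
  resVOA Y omega (a - 1) K u v = resVA (expY Y omega) a K u v.
Proof.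
have [N YN] := Y_trunc u v; set B := absz (N + K).
have NB i : (B <= i)%N -> N <= i%:Z - K by rewrite /B; lia.
rewrite resVOA_hom (@fsumE _ _ B); last by move=> i Bi; rewrite YN ?scaler0 ?NB.
rewrite /resVA (@fsumE _ _ B); last first.
  move=> i Bi; rewrite expY_hom (@fsumE _ _ 0%N) ?big_ord0 ?scaler0 // => j _.
  by rewrite YN ?scaler0 //; have := NB i Bi; lia.
pose f i i' := psmul (expser a) (pszpow (Eser C) (- K)) i *
  psmul (expser w) (pszpow (Eser C) (- ((i%:Z - K) + i'%:Z) - 1)) i'.
transitivity (\sum_(i < B) \sum_(i' < B) f i i' *: Y u ((i + i')%N%:Z - K) v); last first.
  apply: eq_bigr => i _; rewrite expY_hom (@fsumE _ _ B); last first.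
    by move=> j Bj; rewrite YN ?scaler0 //; have := NB j Bj; lia.
  by rewrite scaler_sumr; apply: eq_bigr => j _; rewrite scalerA; congr (_ *: Y u _ v); lia.
rewrite (@sumZ_antidiagonal _ _ f (fun l => Y u (l%:Z - K) v)); last by move=> l /NB/YN.
by apply: eq_bigr => l _; rewrite resVA_expY_coef; congr (binC _ _ *: _); ring.
Qed.

End Homogeneous.

Hypothesis V_graded : forall v, exists s : seq (int * V),
  (forall p, p \in s -> in_weight Y omega p.1 p.2) /\ v = \sum_(p <- s) p.2.

Lemma expY_suml (s : seq (int * V)) k v :
  (forall p, p \in s -> in_weight Y omega p.1 p.2) ->
  expY Y omega (\sum_(p <- s) p.2) k v = \sum_(p <- s) expY Y omega p.2 k v.
Proof.
move=> s_wt; rewrite /expY -fsum_big; last by move=> p /s_wt/expY_hom_fsupp.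
apply: eq_fsum => i; rewrite exchange_big /=; apply: eq_bigr => j _.
by rewrite (linf_sum (iter_linear _ L0_linear)) (linf_sum (Y_linear_l _ _)) scaler_sumr.
Qed.

Lemma resVOA_expY a K u v : resVOA Y omega (a - 1) K u v = resVA (expY Y omega) a K u v.
Proof.
have [s [s_wt ->]] := V_graded u.
have -> : resVOA Y omega (a - 1) K (\sum_(p <- s) p.2) v =
          \sum_(p <- s) resVOA Y omega (a - 1) K p.2 v.
  rewrite /resVOA -fsum_big; last by move=> p /s_wt/resVOA_hom_fsupp.
  by apply: eq_fsum => i; rewrite (linf_sum (binop_linear _ _)) (linf_sum (Y_linear_l _ _)).
have -> : resVA (expY Y omega) a K (\sum_(p <- s) p.2) v =
          \sum_(p <- s) resVA (expY Y omega) a K p.2 v.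
  rewrite /resVA -fsum_big; last first.
    move=> p /s_wt/expY_hom_trunc/(_ v)[N EN].
    by exists (absz (N + K)) => i Ni; rewrite EN ?scaler0 //; lia.
  by apply: eq_fsum => i; rewrite expY_suml // scaler_sumr.
by apply: eq_big_seq => p /s_wt/resVOA_expY_hom; apply.
Qed.

End VertexAlgebra.

Section VertexOperatorAlgebra.
Variables (C : numClosedFieldType) (V : lmodType C) (Y : V -> int -> V -> V).
Variables (one omega : V) (c : C).
Hypothesis VOA : is_VOA Y one omega c.

Lemma VOA_vertex_algebra : is_vertex_algebra Y one.
Proof. by case: VOA. Qed.

Lemma VOA_graded v : exists s : seq (int * V),
  (forall p, p \in s -> in_weight Y omega p.1 p.2) /\ v = \sum_(p <- s) p.2.
Proof. by case: VOA => _ [graded _ _] _ _ _; apply: graded. Qed.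

Lemma Y_Lm1 w k v : Y (Lop Y omega (-1) w) k v = - (k%:~R) *: Y w (k - 1) v.
Proof. by case: VOA. Qed.

Lemma Lm1_vacuum u : Lop Y omega (-1) u = Y u (-2) one.
Proof.
rewrite -[LHS](Y_creation VOA_vertex_algebra _).1 Y_Lm1.
by rewrite (_ : -1 - 1 = -2 :> int) // mulrN1z opprK scale1r.
Qed.

(* By creation only u_{-2} 1 (i = 0) and (L(0) u)_{-1} 1 (i = 1) survive in u[-2] 1. *)
Lemma Dop_expY u : Dop (expY Y omega) one u = Lm1L0 Y omega u.
Proof.
have crea := Y_creation VOA_vertex_algebra.
rewrite /Dop /expY (@fsumE _ _ 2%N); last first.
  by move=> i i2; apply: big1 => j _; rewrite (crea _).2 ?scaler0 //; lia.
rewrite !big_ord_recl !big_ord0 /= /psmul /ps1 /bump /= big_ord_recl big_ord0 /=.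
rewrite Eser0 addn0 addr0 fact0 (_ : 1`! = 1%N) // invr1 !mulr1 mulr0 scale0r.
rewrite !scale1r !addr0 add0r (_ : -2 + Posz 1 = -1) // (crea _).1.
by rewrite mul1r scale1r /Lm1L0 Lm1_vacuum.
Qed.

End VertexOperatorAlgebra.

Section ExpAutomorphism.
Variables (C : numClosedFieldType) (V : lmodType C) (Y : V -> int -> V -> V).
Variables (one omega : V) (g : V -> V).
Hypothesis g_aut : is_VOA_aut Y one omega g.

Lemma expY_aut : is_VA_aut (expY Y omega) one g.
Proof.
case: g_aut => -[g_lin g_bij g_Y g_one] g_omega; split => // u k v.
have g_L0 x : g (L0 Y omega x) = L0 Y omega (g x) by rewrite /L0 /Lop g_Y g_omega.
have g_iterL0 j x : g (iter j (L0 Y omega) x) = iter j (L0 Y omega) (g x).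
  by elim: j => //= j IH; rewrite g_L0 IH.
rewrite /expY (linf_fsum g_lin _ (bij_inj g_bij)); apply: eq_fsum => i.
by rewrite (linf_sum g_lin); apply: eq_bigr => j _; rewrite (linfZ g_lin) g_Y g_iterL0.
Qed.

End ExpAutomorphism.

Section ZhuShift.
Variables (C : numClosedFieldType) (V : lmodType C) (g : V -> V) (T : nat).
Variables (res res' : C -> int -> V -> V -> V) (s s' : C) (D : V -> V).
Hypothesis res_shift : forall a, res (s + a) = res' (s' + a).

Lemma res_expo r M : res (expo T s r M) = res' (expo T s' r M).
Proof. by rewrite /expo -!addrA res_shift. Qed.

Lemma prod_shift : prod g T res s = prod g T res' s'.
Proof.
do 5 apply: funext => ?; apply: eq_bigr => r _; rewrite /prod_r.
by case: ifP => // _; apply: eq_bigr => i _; rewrite res_expo.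
Qed.

Lemma circ_r_shift : circ_r T res s = circ_r T res' s'.
Proof. by do 5 apply: funext => ?; rewrite /circ_r res_expo. Qed.

Lemma Oprime_shift : Oprime g T res s D = Oprime g T res' s' D.
Proof. by rewrite /Oprime circ_r_shift. Qed.

Lemma Ofull_shift : Ofull g T res s D = Ofull g T res' s' D.
Proof. by rewrite /Ofull /O2 /O3 Oprime_shift prod_shift. Qed.

End ZhuShift.

Theorem lemma8p7 (C : numClosedFieldType) (V : lmodType C)
    (Y : V -> int -> V -> V) (one omega : V) (c : C) (g : V -> V) (T N M : nat) :
  is_VOA Y one omega c -> is_VOA_aut Y one omega g -> has_order g T ->
  [/\ is_VA_aut (expY Y omega) one g,
      (* A_{g,n}(V,omega) = A~_{g,n}(exp(V,omega)) *)
      (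
      (* O_{g,n}(V) = O~_{g,n}(exp(V,omega)) *)
      (forall v, OV_n Y omega g T N v <-> OE_n (expY Y omega) one g T N v) /\
      (* the products of A_{g,n}(V,omega) and A~_{g,n}(exp(V,omega)) agree *)
      (forall u v, OV_n Y omega g T N
                     (starV Y omega g T N N N u v - bulletE (expY Y omega) g T N N N u v)))
    & (* A_{g,n,m}(V,omega) = A~_{g,n,m}(exp(V,omega)) *)
      [/\ (* O_{g,n,m}(V) = O~_{g,n,m}(exp(V,omega)) *)
      (forall v, OV_nm Y omega g T N M v <-> OE_nm (expY Y omega) one g T N M v),
      (* left actions agree on A_{g,n,m} *)
      (forall u v, OV_nm Y omega g T N M
                     (starV Y omega g T M N N u v - bulletE (expY Y omega) g T M N N u v))
    & (* right actions agree on A_{g,n,m} *)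
      (forall u v, OV_nm Y omega g T N M
                     (starV Y omega g T M M N u v - bulletE (expY Y omega) g T M M N u v))]].
Proof.
move=> VOA g_aut _.
have res_shift a : resVOA Y omega (-1 + a) = resVA (expY Y omega) (0 + a).
  do 3 apply: funext => ?.
  by rewrite add0r addrC (resVOA_expY (VOA_vertex_algebra VOA) (VOA_graded VOA)).
have D_eq : Lm1L0 Y omega = Dop (expY Y omega) one.
  by apply: funext => u; rewrite (Dop_expY VOA).
rewrite /OV_n /OE_n /OV_nm /OE_nm /On /starV /bulletE D_eq.
rewrite (Oprime_shift g T _ res_shift) (Ofull_shift g T _ res_shift) (prod_shift g T res_shift).
split; first exact: expY_aut.
- by split => // u v; rewrite subrr; exact: span0.
- by split => // u v; rewrite subrr; exact: span0.
Qed.
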